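(* In the setting of the Stäckel metric $g$, the integrals $I_2,I_3$, the constants $\lambda,\mu$ and the four real distinct direction fields $\tau_1,\dots,\tau_4$ on an open set $U$ defined by $I_2-\lambda g=I_3-\mu g=0$ (as described in the context), for each $i\in\{1,2,3,4\}$ the 4-web $w_i$ on $U$ formed by the three foliations by coordinate surfaces $x=\mathrm{const}$, $y=\mathrm{const}$, $z=\mathrm{const}$ and the foliation by integral curves of $\tau_i$ has rank at least $2$.
   Context: Let $x,y,z$ be local coordinates and $E,K,P$ functions of $x$ only, $F,L,Q$ functions of $y$ only, $G,M,R$ functions of $z$ only, with $\Delta:=ELR+FMP+GKQ-EMQ-FKR-GLP\neq 0$ and $LR-MQ$, $MP-KR$, $KQ-LP$ nonzero. The metric is $g=\frac{\Delta}{LR-MQ}dx^2+\frac{\Delta}{MP-KR}dy^2+\frac{\Delta}{KQ-LP}dz^2$, and $I_2=\frac{\Delta(GQ-FR)}{(LR-MQ)^2}dx^2+\frac{\Delta(ER-GP)}{(MP-KR)^2}dy^2+\frac{\Delta(FP-EQ)}{(KQ-LP)^2}dz^2$, $I_3=\frac{\Delta(FM-GL)}{(LR-MQ)^2}dx^2+\frac{\Delta(GK-EM)}{(MP-KR)^2}dy^2+\frac{\Delta(EL-FK)}{(KQ-LP)^2}dz^2$, quadratic forms in velocities. Constants $\lambda,\mu$ are such that on $U$ the equations $I_2-\lambda g=I_3-\mu g=0$ define four distinct real points of $PT_mM$ at each $m\in U$, i.e. four direction fields $\tau_1,\dots,\tau_4$. For a web $w$ formed by foliations $\mathcal{F}_1,\dots,\mathcal{F}_d$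 (leaves may have different dimensions), an abelian relation is a $d$-tuple of 1-forms $(\sigma_1,\dots,\sigma_d)$ such that each $\sigma_i$ vanishes on the leaves of $\mathcal{F}_i$, each $\sigma_i$ is closed, and $\sigma_1+\dots+\sigma_d=0$; the rank of $w$ is the dimension of the real vector space of abelian relations. *)

From Stdlib Require Import Reals Lra List.
From Coquelicot Require Import Coquelicot.
Import ListNotations.
Open Scope R_scope.

Definition fn3 := R -> R -> R -> R.

Record vec3 := Vec3 { vx : R; vy : R; vz : R }.
Definition zero_vec := Vec3 0 0 0.
Definition scale_vec (t : R) (v : vec3) := Vec3 (t * vx v) (t * vy v) (t * vz v).

Definition open3 (U : R -> R -> R -> Prop) : Prop :=
  forall x y z, U x y z -> exists d, d > 0 /\
    forall x' y' z', Rabs (x' - x) < d -> Rabs (y' - y) < d -> Rabs (z' - z) < d ->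
      U x' y' z'.

Definition cont3 (f : fn3) (x y z : R) : Prop :=
  forall eps, eps > 0 -> exists d, d > 0 /\
    forall x' y' z', Rabs (x' - x) < d -> Rabs (y' - y) < d -> Rabs (z' - z) < d ->
      Rabs (f x' y' z' - f x y z) < eps.

Definition pd (i : nat) (f : fn3) : fn3 := fun x y z =>
  match i with
  | O => Derive (fun t => f t y z) x
  | S O => Derive (fun t => f x t z) y
  | _ => Derive (fun t => f x y t) z
  end.

Definition ex_pd (i : nat) (f : fn3) (x y z : R) : Prop :=
  match i with
  | O => ex_derive (fun t => f t y z) x
  | S O => ex_derive (fun t => f x t z) y
  | _ => ex_derive (fun t => f x y t) z
  end.

Definition iter_pd (l : list nat) (f : fn3) : fn3 := fold_right pd f l.

Definition smooth3_on (U : R -> R -> R -> Prop) (f : fn3) : Prop :=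
  forall (l : list nat) x y z, U x y z ->
    cont3 (iter_pd l f) x y z /\ forall i, ex_pd i (iter_pd l f) x y z.

Record oneform := OneForm { fdx : fn3; fdy : fn3; fdz : fn3 }.
Definition zero_form := OneForm (fun _ _ _ => 0) (fun _ _ _ => 0) (fun _ _ _ => 0).

Definition form_at (s : oneform) (x y z : R) (v : vec3) : R :=
  fdx s x y z * vx v + fdy s x y z * vy v + fdz s x y z * vz v.

Definition closed_on (U : R -> R -> R -> Prop) (s : oneform) : Prop :=
  smooth3_on U (fdx s) /\ smooth3_on U (fdy s) /\ smooth3_on U (fdz s) /\
  forall x y z, U x y z ->
    pd 1 (fdx s) x y z = pd 0 (fdy s) x y z /\
    pd 2 (fdx s) x y z = pd 0 (fdz s) x y z /\
    pd 2 (fdy s) x y z = pd 1 (fdz s) x y z.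

(** A foliation is given by its tangent distribution: D x y z v means that
    v is tangent at (x,y,z) to the leaf through that point. *)
Definition foliation := R -> R -> R -> vec3 -> Prop.

Definition fol_x : foliation := fun _ _ _ v => vx v = 0.
Definition fol_y : foliation := fun _ _ _ v => vy v = 0.
Definition fol_z : foliation := fun _ _ _ v => vz v = 0.
Definition line_fol (t1 t2 t3 : fn3) : foliation := fun x y z v =>
  exists c, v = Vec3 (c * t1 x y z) (c * t2 x y z) (c * t3 x y z).

Definition vanishes_on (U : R -> R -> R -> Prop) (D : foliation) (s : oneform) : Prop :=
  forall x y z v, U x y z -> D x y z v -> form_at s x y z v = 0.

Definition abelian_relation (U : R -> R -> R -> Prop) (W : list foliation)
    (S : list oneform) : Prop :=
  length S = length W /\
  List.Forall2 (vanishes_on U) W S /\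
  List.Forall (closed_on U) S /\
  forall x y z v, U x y z ->
    fold_right (fun s acc => form_at s x y z v + acc) 0 S = 0.

Definition lincomb_zero (U : R -> R -> R -> Prop) (cs : list R)
    (rels : list (list oneform)) : Prop :=
  forall (k : nat) x y z v, U x y z ->
    fold_right Rplus 0
      (map (fun p => fst p * form_at (nth k (snd p) zero_form) x y z v)
           (combine cs rels)) = 0.

Definition rank_ge (U : R -> R -> R -> Prop) (W : list foliation) (n : nat) : Prop :=
  exists rels : list (list oneform),
    length rels = n /\
    List.Forall (abelian_relation U W) rels /\
    forall cs : list R, length cs = n -> lincomb_zero U cs rels ->
      List.Forall (fun c => c = 0) cs.

Definition smooth1_at (f : R -> R) (x : R) : Prop := forall n, ex_derive_n f n x.

(** The Staeckel data. E,K,P functions of x; F,L,Q of y; G,M,Rf of z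
    (Rf is the paper's R, renamed to avoid a clash with the reals). *)

Definition stDelta (E K P F L Q G M Rf : R -> R) (x y z : R) : R :=
  E x * L y * Rf z + F y * M z * P x + G z * K x * Q y
  - E x * M z * Q y - F y * K x * Rf z - G z * L y * P x.

Definition den1 (E K P F L Q G M Rf : R -> R) (x y z : R) : R := L y * Rf z - M z * Q y.
Definition den2 (E K P F L Q G M Rf : R -> R) (x y z : R) : R := M z * P x - K x * Rf z.
Definition den3 (E K P F L Q G M Rf : R -> R) (x y z : R) : R := K x * Q y - L y * P x.

Definition gq (E K P F L Q G M Rf : R -> R) (x y z : R) (v : vec3) : R :=
  stDelta E K P F L Q G M Rf x y z / den1 E K P F L Q G M Rf x y z * vx v ^ 2 + stDelta E K P F L Q G M Rf x y z / den2 E K P F L Q G M Rf x y z * vy v ^ 2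
  + stDelta E K P F L Q G M Rf x y z / den3 E K P F L Q G M Rf x y z * vz v ^ 2.

Definition I2q (E K P F L Q G M Rf : R -> R) (x y z : R) (v : vec3) : R :=
  stDelta E K P F L Q G M Rf x y z * (G z * Q y - F y * Rf z) / (den1 E K P F L Q G M Rf x y z) ^ 2 * vx v ^ 2
  + stDelta E K P F L Q G M Rf x y z * (E x * Rf z - G z * P x) / (den2 E K P F L Q G M Rf x y z) ^ 2 * vy v ^ 2
  + stDelta E K P F L Q G M Rf x y z * (F y * P x - E x * Q y) / (den3 E K P F L Q G M Rf x y z) ^ 2 * vz v ^ 2.

Definition I3q (E K P F L Q G M Rf : R -> R) (x y z : R) (v : vec3) : R :=
  stDelta E K P F L Q G M Rf x y z * (F y * M z - G z * L y) / (den1 E K P F L Q G M Rf x y z) ^ 2 * vx v ^ 2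
  + stDelta E K P F L Q G M Rf x y z * (G z * K x - E x * M z) / (den2 E K P F L Q G M Rf x y z) ^ 2 * vy v ^ 2
  + stDelta E K P F L Q G M Rf x y z * (E x * L y - F y * K x) / (den3 E K P F L Q G M Rf x y z) ^ 2 * vz v ^ 2.

(** v (nonzero) represents a point of P T_m M on the conic intersection
    q2 = q3 = 0. *)
Definition proj_sol (q2 q3 : vec3 -> R) (v : vec3) : Prop :=
  v <> zero_vec /\ q2 v = 0 /\ q3 v = 0.

Definition proportional (v w : vec3) : Prop :=
  exists t, t <> 0 /\ w = scale_vec t v.

Definition four_distinct_points (q2 q3 : vec3 -> R) : Prop :=
  exists u1 u2 u3 u4,
    proj_sol q2 q3 u1 /\ proj_sol q2 q3 u2 /\ proj_sol q2 q3 u3 /\ proj_sol q2 q3 u4 /\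
    ~ proportional u1 u2 /\ ~ proportional u1 u3 /\ ~ proportional u1 u4 /\
    ~ proportional u2 u3 /\ ~ proportional u2 u4 /\ ~ proportional u3 u4 /\
    forall v, proj_sol q2 q3 v ->
      proportional u1 v \/ proportional u2 v \/ proportional u3 v \/ proportional u4 v.

From Stdlib Require Import Reals Lra List.
From Coquelicot Require Import Coquelicot.
Import ListNotations.
Open Scope R_scope.

(* At a point of U write a direction v with I2 - lam g = I3 - mu g = 0 through
   X_i = Delta v_i^2 / d_i^2, where d_1, d_2, d_3 are the denominators of g, i.e. the cofactors
   of E, F, G in the Staeckel matrix S = [[E,F,G],[K,L,M],[P,Q,R]].  Both equations are linear
   in X, and force X to be proportional to the row (f_1, f_2, f_3) = (E,F,G) + lam (K,L,M)
   + mu (P,Q,R) of functions of x, y, z respectively; so v_i^2 is proportional to d_i^2 f_i.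
   Four distinct solution directions force every f_i to be nonzero, and then, with eps_i the
   (locally constant) sign of tau_i d_i, the vector eps_i tau_i / sqrt|f_i| is proportional to
   (d_1, d_2, d_3).  This vector is orthogonal to the rows (K,L,M) and (P,Q,R) of S, so for
   (a,b,c) either row the three closed forms eps_1 a(x)/sqrt|f_1| dx, eps_2 b(y)/sqrt|f_2| dy,
   eps_3 c(z)/sqrt|f_3| dz and minus their sum form an abelian relation; the two relations are
   independent because S is invertible. *)

Definition open1 (V : R -> Prop) : Prop :=
  forall x, V x -> exists d, d > 0 /\ forall x', Rabs (x' - x) < d -> V x'.

Fixpoint Cn_on (V : R -> Prop) (n : nat) (u : R -> R) : Prop :=
  match n with
  | O => True
  | S n => (forall x, V x -> ex_derive u x) /\ Cn_on V n (Derive u)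
  end.

Definition smooth_on (V : R -> Prop) (u : R -> R) : Prop := forall n, Cn_on V n u.

Lemma Cn_on_S_le V n u : Cn_on V (S n) u -> Cn_on V n u.
Proof.
  revert u; induction n as [|n IH]; simpl; auto.
  intros u [Du [DDu CDu]]. split; auto. apply IH. simpl. auto.
Qed.

Lemma Derive_n_Derive f n x : Derive_n (Derive f) n x = Derive_n f (S n) x.
Proof. rewrite <- Nat.add_1_r. apply (Derive_n_comp f n 1). Qed.

Lemma smooth_on_of_smooth1 V u : (forall x, V x -> smooth1_at u x) -> smooth_on V u.
Proof.
  intros Hu n. revert u Hu. induction n as [|n IH]; simpl; auto.
  intros u Hu. split.
  - intros x Vx. exact (Hu x Vx 1%nat).
  - apply IH. intros x Vx [|k]; simpl; auto.
    apply ex_derive_ext with (Derive_n u (S k)).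
    + intros t. symmetry. apply Derive_n_Derive.
    + exact (Hu x Vx (S (S k))).
Qed.

Section SmoothOn.

Variable V : R -> Prop.
Hypothesis V_open : open1 V.

Lemma locally_open1 (P : R -> Prop) x : V x -> (forall y, V y -> P y) -> locally x P.
Proof.
  intros Vx HP. destruct (V_open x Vx) as [d [d_pos Hd]].
  exists (mkposreal d d_pos). intros y Hy. apply HP, Hd, Hy.
Qed.

Lemma Cn_on_ext n u v : (forall x, V x -> u x = v x) -> Cn_on V n u -> Cn_on V n v.
Proof.
  revert u v; induction n as [|n IH]; simpl; auto.
  intros u v Euv [Du Cu]. split.
  - intros x Vx. apply ex_derive_ext_loc with u; auto. apply locally_open1; auto.
  - apply IH with (Derive u); auto.
    intros x Vx. apply Derive_ext_loc, locally_open1; auto.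
Qed.

Lemma Cn_on_const n c : Cn_on V n (fun _ => c).
Proof.
  revert c; induction n as [|n IH]; simpl; auto. intros c. split.
  - intros; apply ex_derive_const.
  - apply Cn_on_ext with (fun _ => 0); auto. intros; rewrite Derive_const; auto.
Qed.

Lemma Cn_on_plus n u v : Cn_on V n u -> Cn_on V n v -> Cn_on V n (fun x => u x + v x).
Proof.
  revert u v; induction n as [|n IH]; simpl; auto.
  intros u v [Du Cu] [Dv Cv]. split.
  - intros x Vx. apply (ex_derive_plus u v); auto.
  - apply Cn_on_ext with (fun x => Derive u x + Derive v x); auto.
    intros x Vx. rewrite Derive_plus; auto.
Qed.

Lemma Cn_on_mult n u v : Cn_on V n u -> Cn_on V n v -> Cn_on V n (fun x => u x * v x).
Proof.
  revert u v; induction n as [|n IH]; simpl; auto.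
  intros u v Cu Cv.
  pose proof (Cn_on_S_le _ _ _ Cu) as Cu'. pose proof (Cn_on_S_le _ _ _ Cv) as Cv'.
  destruct Cu as [Du CDu], Cv as [Dv CDv]. split.
  - intros x Vx. apply ex_derive_mult; auto.
  - apply Cn_on_ext with (fun x => Derive u x * v x + u x * Derive v x).
    + intros x Vx. rewrite Derive_mult; auto.
    + apply Cn_on_plus; auto.
Qed.

Lemma smooth_on_plus u v : smooth_on V u -> smooth_on V v -> smooth_on V (fun x => u x + v x).
Proof. intros Hu Hv n. apply Cn_on_plus; auto. Qed.

Lemma smooth_on_mult u v : smooth_on V u -> smooth_on V v -> smooth_on V (fun x => u x * v x).
Proof. intros Hu Hv n. apply Cn_on_mult; auto. Qed.

Lemma smooth_on_scal c u : smooth_on V u -> smooth_on V (fun x => c * u x).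
Proof. intros Hu. apply smooth_on_mult; auto. intros n. apply Cn_on_const. Qed.

Variable f : R -> R.
Hypotheses (f_smooth : smooth_on V f) (f_nonzero : forall x, V x -> f x <> 0).

Lemma smooth_on_inv : smooth_on V (fun x => / f x).
Proof.
  intros n; induction n as [|n IH]; simpl; auto.
  destruct (f_smooth (S n)) as [Df CDf]. split.
  - intros x Vx. apply ex_derive_inv; auto.
  - apply Cn_on_ext with (fun x => - Derive f x * (/ f x * / f x)).
    + intros x Vx. rewrite Derive_inv; auto. field. auto.
    + apply Cn_on_mult; [|apply Cn_on_mult; auto].
      apply Cn_on_ext with (fun x => -1 * Derive f x); [intros; ring|].
      apply Cn_on_mult; auto. apply Cn_on_const.
Qed.

Lemma is_derive_inv_sqrt_abs x : ex_derive f x -> f x <> 0 ->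
  is_derive (fun t => / sqrt (Rabs (f t))) x (- / 2 * / sqrt (Rabs (f x)) * (Derive f x * / f x)).
Proof.
  intros Df fx_nz.
  assert (abs_pos : 0 < Rabs (f x)) by (apply Rabs_pos_lt; auto).
  assert (sqrt_pos : 0 < sqrt (Rabs (f x))) by (apply sqrt_lt_R0; auto).
  assert (sqrt_sq : sqrt (Rabs (f x)) * sqrt (Rabs (f x)) = Rabs (f x)) by (apply sqrt_sqrt; lra).
  auto_derive.
  - repeat split; auto; lra.
  - change (Derive (fun t => f t) x) with (Derive f x).
    set (s := sqrt (Rabs (f x))) in *. set (D := Derive f x).
    destruct (Rlt_or_le 0 (f x)) as [fx_pos|fx_neg].
    + rewrite (sign_eq_1 _ fx_pos). rewrite Rabs_pos_eq in sqrt_sq by lra.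
      rewrite <- sqrt_sq. field. lra.
    + rewrite (sign_eq_m1 (f x)) by lra. rewrite Rabs_left in sqrt_sq by lra.
      replace (f x) with (- (s * s)) by lra. field. lra.
Qed.

Lemma smooth_on_inv_sqrt_abs : smooth_on V (fun x => / sqrt (Rabs (f x))).
Proof.
  intros n; induction n as [|n IH]; simpl; auto.
  destruct (f_smooth (S n)) as [Df CDf]. split.
  - intros x Vx. eexists. apply is_derive_inv_sqrt_abs; auto.
  - apply Cn_on_ext with (fun x => - / 2 * / sqrt (Rabs (f x)) * (Derive f x * / f x)).
    + intros x Vx. symmetry. apply is_derive_unique, is_derive_inv_sqrt_abs; auto.
    + apply Cn_on_mult; [|apply Cn_on_mult; auto; apply smooth_on_inv].
      apply Cn_on_mult; auto. apply Cn_on_const.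
Qed.

End SmoothOn.

Lemma Cn_on_Derive_n V n k u : open1 V -> Cn_on V (n + k) u -> Cn_on V k (Derive_n u n).
Proof.
  intros V_open. revert u; induction n as [|n IH]; intros u Cu; simpl in Cu; auto.
  destruct Cu as [_ CDu]. apply Cn_on_ext with (Derive_n (Derive u) n); auto.
  intros x _. apply Derive_n_Derive.
Qed.

Lemma smooth1_of_smooth_on V u x : open1 V -> smooth_on V u -> V x -> smooth1_at u x.
Proof.
  intros V_open Hu Vx [|n]; simpl; auto.
  apply (Cn_on_Derive_n V n 1 u V_open (Hu _)); auto.
Qed.

Lemma proportional2_of_cross (y1 z1 y2 z2 : R) :
  (y1 <> 0 \/ z1 <> 0) -> (y2 <> 0 \/ z2 <> 0) -> y1 * z2 = y2 * z1 ->
  exists t, t <> 0 /\ y2 = t * y1 /\ z2 = t * z1.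
Proof.
  intros N1 N2 cross. destruct (Req_dec y1 0) as [y1_0|y1_nz].
  - assert (z1_nz : z1 <> 0) by tauto. subst y1.
    assert (y2_0 : y2 = 0) by (apply (Rmult_eq_reg_r z1); auto; lra).
    exists (z2 / z1). split; [|split; [rewrite y2_0; ring | field; auto]].
    intros t_0. destruct N2 as [N2|N2]; apply N2; auto.
    replace z2 with (z2 / z1 * z1) by (field; auto). rewrite t_0. ring.
  - exists (y2 / y1). split; [|split; [field; auto|]].
    + intros t_0. destruct N2 as [N2|N2]; apply N2.
      * replace y2 with (y2 / y1 * y1) by (field; auto). rewrite t_0. ring.
      * apply (Rmult_eq_reg_l y1); auto. rewrite cross.
        replace y2 with (y2 / y1 * y1) by (field; auto). rewrite t_0. ring.
    + apply (Rmult_eq_reg_l y1); auto. rewrite cross. field. auto.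
Qed.

Lemma sq_eq_0 (a : R) : a ^ 2 = 0 -> a = 0.
Proof. intros E. nra. Qed.

Lemma sq_eq_cases (a b : R) : a ^ 2 = b ^ 2 -> a = b \/ a = - b.
Proof. intros E. apply Rsqr_eq. rewrite !Rsqr_pow2. exact E. Qed.

(* Zeros of a binary form a y^2 - b z^2 have cross products equal up to sign; the signs cannot
   all be wrong, so among three zeros two are proportional. *)
Lemma cross_two_of_three (y1 z1 y2 z2 y3 z3 : R) :
  (y1 <> 0 \/ z1 <> 0) ->
  (y1 * z2) ^ 2 = (y2 * z1) ^ 2 -> (y1 * z3) ^ 2 = (y3 * z1) ^ 2 ->
  y1 * z2 = y2 * z1 \/ y1 * z3 = y3 * z1 \/ y2 * z3 = y3 * z2.
Proof.
  intros N1 sq12 sq13.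
  destruct (sq_eq_cases _ _ sq12) as [|opp12]; [left; auto|].
  destruct (sq_eq_cases _ _ sq13) as [|opp13]; [right; left; auto|].
  right; right. destruct (Req_dec y1 0) as [y1_0|y1_nz].
  - assert (z1_nz : z1 <> 0) by tauto. subst y1.
    assert (y2 = 0) by (apply (Rmult_eq_reg_r z1); auto; lra).
    assert (y3 = 0) by (apply (Rmult_eq_reg_r z1); auto; lra).
    subst. ring.
  - destruct (Req_dec z1 0) as [z1_0|z1_nz].
    + subst z1.
      assert (z2 = 0) by (apply (Rmult_eq_reg_l y1); auto; lra).
      assert (z3 = 0) by (apply (Rmult_eq_reg_l y1); auto; lra).
      subst. ring.
    + apply (Rmult_eq_reg_l (y1 * z1)); [|apply Rmult_integral_contrapositive_currified; auto].
      replace (y1 * z1 * (y2 * z3)) with ((y2 * z1) * (y1 * z3)) by ring.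
      replace (y1 * z1 * (y3 * z2)) with ((y3 * z1) * (y1 * z2)) by ring.
      rewrite opp12, opp13. ring.
Qed.

Definition squares_proportional (w v : vec3) : Prop :=
  exists s, vx v ^ 2 = s * vx w /\ vy v ^ 2 = s * vy w /\ vz v ^ 2 = s * vz w.

Definition three_points (S : vec3 -> Prop) : Prop :=
  exists u1 u2 u3, S u1 /\ S u2 /\ S u3 /\
    ~ proportional u1 u2 /\ ~ proportional u1 u3 /\ ~ proportional u2 u3.

(* Stated for an arbitrary ordering (pa, pb, pc) of the coordinates, so that it covers all three. *)
Lemma weight_nonzero (S : vec3 -> Prop) (pa pb pc : vec3 -> R) (wa wb wc : R) :
  (forall v w t, pa w = t * pa v -> pb w = t * pb v -> pc w = t * pc v -> w = scale_vec t v) ->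
  (forall v, S v -> v <> zero_vec /\
     exists s, pa v ^ 2 = s * wa /\ pb v ^ 2 = s * wb /\ pc v ^ 2 = s * wc) ->
  three_points S -> wa <> 0.
Proof.
  intros coords HS [u1 [u2 [u3 [S1 [S2 [S3 [N12 [N13 N23]]]]]]]] wa_0.
  assert (pa_0 : forall v, S v -> pa v = 0).
  { intros v Sv. destruct (HS v Sv) as [_ [s [Ea _]]].
    apply sq_eq_0. rewrite Ea, wa_0. ring. }
  assert (pbc_nz : forall v, S v -> pb v <> 0 \/ pc v <> 0).
  { intros v Sv. destruct (Req_dec (pb v) 0) as [pb_0|]; auto.
    destruct (Req_dec (pc v) 0) as [pc_0|]; auto.
    exfalso. apply (proj1 (HS v Sv)).
    assert (v_0 : v = scale_vec 0 v) by (apply coords; rewrite ?(pa_0 v Sv), ?pb_0, ?pc_0; ring).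
    rewrite v_0. unfold scale_vec, zero_vec. f_equal; ring. }
  assert (cross_sq : forall u v, S u -> S v -> (pb u * pc v) ^ 2 = (pb v * pc u) ^ 2).
  { intros u v Su Sv.
    destruct (HS u Su) as [_ [s [_ [Ebu Ecu]]]], (HS v Sv) as [_ [s' [_ [Ebv Ecv]]]].
    rewrite !Rpow_mult_distr, Ebu, Ecu, Ebv, Ecv. ring. }
  assert (prop_of_cross : forall u v, S u -> S v -> pb u * pc v = pb v * pc u -> proportional u v).
  { intros u v Su Sv cross.
    destruct (proportional2_of_cross _ _ _ _ (pbc_nz u Su) (pbc_nz v Sv) cross)
      as [t [t_nz [Eb Ec]]].
    exists t. split; auto. apply coords; auto. rewrite (pa_0 u Su), (pa_0 v Sv). ring. }
  destruct (cross_two_of_three (pb u1) (pc u1) (pb u2) (pc u2) (pb u3) (pc u3) (pbc_nz u1 S1)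
              (cross_sq u1 u2 S1 S2) (cross_sq u1 u3 S1 S3)) as [C|[C|C]].
  - apply N12, prop_of_cross; auto.
  - apply N13, prop_of_cross; auto.
  - apply N23, prop_of_cross; auto.
Qed.

Lemma weights_nonzero (S : vec3 -> Prop) (w : vec3) :
  (forall v, S v -> v <> zero_vec /\ squares_proportional w v) ->
  three_points S -> vx w <> 0 /\ vy w <> 0 /\ vz w <> 0.
Proof.
  intros HS S3. repeat split.
  - apply (weight_nonzero S vx vy vz (vx w) (vy w) (vz w)); [| |exact S3].
    + intros [] [] t; simpl; intros -> -> ->; reflexivity.
    + intros v Sv. destruct (HS v Sv) as [v_nz [s E]]. eauto.
  - apply (weight_nonzero S vy vx vz (vy w) (vx w) (vz w)); [| |exact S3].
    + intros [] [] t; simpl; intros -> -> ->; reflexivity.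
    + intros v Sv. destruct (HS v Sv) as [v_nz [s [Ex [Ey Ez]]]]. eauto 6.
  - apply (weight_nonzero S vz vx vy (vz w) (vx w) (vy w)); [| |exact S3].
    + intros [] [] t; simpl; intros -> -> ->; reflexivity.
    + intros v Sv. destruct (HS v Sv) as [v_nz [s [Ex [Ey Ez]]]]. eauto 6.
Qed.

Lemma coords_nonzero (w v : vec3) :
  vx w <> 0 -> vy w <> 0 -> vz w <> 0 -> v <> zero_vec -> squares_proportional w v ->
  vx v <> 0 /\ vy v <> 0 /\ vz v <> 0.
Proof.
  intros wx wy wz v_nz [s [Ex [Ey Ez]]].
  assert (s_nz : s <> 0).
  { intros s_0. subst s. apply v_nz. destruct v as [a b c]; cbn [vx vy vz] in *.
    unfold zero_vec; f_equal; apply sq_eq_0; lra. }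
  repeat split; intros c_0.
  - apply (Rmult_integral_contrapositive_currified s (vx w)); auto. rewrite <- Ex, c_0. ring.
  - apply (Rmult_integral_contrapositive_currified s (vy w)); auto. rewrite <- Ey, c_0. ring.
  - apply (Rmult_integral_contrapositive_currified s (vz w)); auto. rewrite <- Ez, c_0. ring.
Qed.

Lemma sq_eq_abs (a s d f : R) : a ^ 2 = s * (d ^ 2 * f) -> a ^ 2 = Rabs s * (d ^ 2 * Rabs f).
Proof.
  intros E. destruct (Req_dec d 0) as [d_0|d_nz].
  - subst d. rewrite E. ring.
  - assert (d2_pos : 0 < d ^ 2) by (apply pow2_gt_0; auto).
    assert (sf_nonneg : 0 <= s * f).
    { apply (Rmult_le_reg_l (d ^ 2)); auto. rewrite Rmult_0_r.
      replace (d ^ 2 * (s * f)) with (a ^ 2) by (rewrite E; ring). apply pow2_ge_0. }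
    rewrite E. replace (Rabs s * (d ^ 2 * Rabs f)) with (d ^ 2 * Rabs (s * f))
      by (rewrite Rabs_mult; ring).
    rewrite Rabs_pos_eq by exact sf_nonneg. ring.
Qed.

Definition stackel_row (a b c : R -> R) (lam mu t : R) : R := a t + lam * b t + mu * c t.

Section StackelFiber.

Variables (E K P F L Q G M Rf : R -> R) (lam mu x y z : R).

Definition conic2 (v : vec3) : R :=
  I2q E K P F L Q G M Rf x y z v - lam * gq E K P F L Q G M Rf x y z v.
Definition conic3 (v : vec3) : R :=
  I3q E K P F L Q G M Rf x y z v - mu * gq E K P F L Q G M Rf x y z v.

Local Notation Delta := (stDelta E K P F L Q G M Rf x y z).
Local Notation d1 := (den1 E K P F L Q G M Rf x y z).
Local Notation d2 := (den2 E K P F L Q G M Rf x y z).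
Local Notation d3 := (den3 E K P F L Q G M Rf x y z).
Local Notation f1 := (stackel_row E K P lam mu x).
Local Notation f2 := (stackel_row F L Q lam mu y).
Local Notation f3 := (stackel_row G M Rf lam mu z).

Lemma stackel_rows_independent (c1 c2 : R) : Delta <> 0 ->
  c1 * K x + c2 * P x = 0 -> c1 * L y + c2 * Q y = 0 -> c1 * M z + c2 * Rf z = 0 ->
  c1 = 0 /\ c2 = 0.
Proof.
  intros Delta_nz Wx Wy Wz.
  assert (Z1 : c1 * Delta = 0).
  { replace (c1 * Delta) with
      ((G z * Q y - F y * Rf z) * (c1 * K x + c2 * P x)
       + (E x * Rf z - G z * P x) * (c1 * L y + c2 * Q y)
       + (F y * P x - E x * Q y) * (c1 * M z + c2 * Rf z)) by (unfold stDelta; ring).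
    rewrite Wx, Wy, Wz. ring. }
  assert (Z2 : c2 * Delta = 0).
  { replace (c2 * Delta) with
      ((F y * M z - G z * L y) * (c1 * K x + c2 * P x)
       + (G z * K x - E x * M z) * (c1 * L y + c2 * Q y)
       + (E x * L y - F y * K x) * (c1 * M z + c2 * Rf z)) by (unfold stDelta; ring).
    rewrite Wx, Wy, Wz. ring. }
  apply Rmult_integral in Z1. apply Rmult_integral in Z2. tauto.
Qed.

Hypotheses (Delta_nz : Delta <> 0) (d1_nz : d1 <> 0) (d2_nz : d2 <> 0) (d3_nz : d3 <> 0).

(* With X_i := Delta v_i^2 / d_i^2 both conics become linear in X, with coefficient rows
   (up to the multiples lam, mu of (d1, d2, d3)) the second and third rows of the adjugate
   of the Staeckel matrix [[E,F,G],[K,L,M],[P,Q,R]]; hence Delta X is a multiple of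
   (f1, f2, f3) = (E,F,G) + lam (K,L,M) + mu (P,Q,R). *)
Lemma conic_squares v : conic2 v = 0 -> conic3 v = 0 ->
  squares_proportional (Vec3 (d1 ^ 2 * f1) (d2 ^ 2 * f2) (d3 ^ 2 * f3)) v.
Proof.
  intros C2 C3.
  set (X1 := Delta * vx v ^ 2 / d1 ^ 2).
  set (X2 := Delta * vy v ^ 2 / d2 ^ 2).
  set (X3 := Delta * vz v ^ 2 / d3 ^ 2).
  set (S := d1 * X1 + d2 * X2 + d3 * X3).
  set (A := (G z * Q y - F y * Rf z) * X1 + (E x * Rf z - G z * P x) * X2
            + (F y * P x - E x * Q y) * X3 - lam * S).
  set (B := (F y * M z - G z * L y) * X1 + (G z * K x - E x * M z) * X2
            + (E x * L y - F y * K x) * X3 - mu * S).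
  assert (A_0 : A = 0) by (rewrite <- C2; unfold conic2, I2q, gq, A, S, X1, X2, X3; field; auto).
  assert (B_0 : B = 0) by (rewrite <- C3; unfold conic3, I3q, gq, B, S, X1, X2, X3; field; auto).
  assert (EX1 : Delta * X1 - S * f1 = K x * A + P x * B).
  { clearbody X1 X2 X3. unfold A, B, S, stackel_row, stDelta, den1, den2, den3. ring. }
  assert (EX2 : Delta * X2 - S * f2 = L y * A + Q y * B).
  { clearbody X1 X2 X3. unfold A, B, S, stackel_row, stDelta, den1, den2, den3. ring. }
  assert (EX3 : Delta * X3 - S * f3 = M z * A + Rf z * B).
  { clearbody X1 X2 X3. unfold A, B, S, stackel_row, stDelta, den1, den2, den3. ring. }
  rewrite A_0, B_0 in EX1, EX2, EX3. unfold X1, X2, X3 in *.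
  exists (S / Delta ^ 2). cbn [vx vy vz]. repeat split.
  - replace (S / Delta ^ 2 * (d1 ^ 2 * f1)) with (S * f1 * d1 ^ 2 / Delta ^ 2) by (field; auto).
    replace (S * f1) with (Delta * (Delta * vx v ^ 2 / d1 ^ 2)) by lra. field. auto.
  - replace (S / Delta ^ 2 * (d2 ^ 2 * f2)) with (S * f2 * d2 ^ 2 / Delta ^ 2) by (field; auto).
    replace (S * f2) with (Delta * (Delta * vy v ^ 2 / d2 ^ 2)) by lra. field. auto.
  - replace (S / Delta ^ 2 * (d3 ^ 2 * f3)) with (S * f3 * d3 ^ 2 / Delta ^ 2) by (field; auto).
    replace (S * f3) with (Delta * (Delta * vz v ^ 2 / d3 ^ 2)) by lra. field. auto.
Qed.

Lemma stackel_fiber (t : vec3) :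
  four_distinct_points conic2 conic3 -> proj_sol conic2 conic3 t ->
  f1 <> 0 /\ f2 <> 0 /\ f3 <> 0 /\ vx t <> 0 /\ vy t <> 0 /\ vz t <> 0 /\
  exists c, vx t ^ 2 = c * (d1 ^ 2 * Rabs f1) /\ vy t ^ 2 = c * (d2 ^ 2 * Rabs f2) /\
            vz t ^ 2 = c * (d3 ^ 2 * Rabs f3).
Proof.
  intros four sol.
  set (w := Vec3 (d1 ^ 2 * f1) (d2 ^ 2 * f2) (d3 ^ 2 * f3)).
  assert (on_conics :
    forall v, proj_sol conic2 conic3 v -> v <> zero_vec /\ squares_proportional w v).
  { intros v [v_nz [C2 C3]]. split; auto. apply conic_squares; auto. }
  assert (three : three_points (proj_sol conic2 conic3)).
  { destruct four as (u1 & u2 & u3 & u4 & S1 & S2 & S3 & _ & N12 & N13 & _ & N23 & _).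
    exists u1, u2, u3. tauto. }
  destruct (weights_nonzero _ w on_conics three) as [w1 [w2 w3]].
  unfold w in w1, w2, w3. cbn [vx vy vz] in w1, w2, w3.
  destruct (on_conics t sol) as [t_nz t_sq].
  destruct (coords_nonzero w t w1 w2 w3 t_nz t_sq) as [tx [ty tz]].
  destruct t_sq as [s [Ex [Ey Ez]]]. unfold w in Ex, Ey, Ez. cbn [vx vy vz] in Ex, Ey, Ez.
  repeat split; auto.
  - intros f_0. apply w1. rewrite f_0. ring.
  - intros f_0. apply w2. rewrite f_0. ring.
  - intros f_0. apply w3. rewrite f_0. ring.
  - exists (Rabs s). repeat split; apply sq_eq_abs; auto.
Qed.

End StackelFiber.

Lemma sign_mul_self (r : R) : sign r * r = Rabs r.
Proof.
  destruct (Rtotal_order r 0) as [r_neg|[r_0|r_pos]].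
  - rewrite sign_eq_m1, Rabs_left; auto. ring.
  - subst. rewrite sign_0, Rabs_R0. ring.
  - rewrite sign_eq_1, Rabs_pos_eq; auto; lra.
Qed.

Lemma sign_scaled_root (t D f c k : R) : t <> 0 -> D <> 0 -> f <> 0 ->
  t ^ 2 = c * (D ^ 2 * Rabs f) ->
  sign (t * D) * (k * / sqrt (Rabs f)) * t = sqrt c * (k * D).
Proof.
  intros t_nz D_nz f_nz E.
  assert (f_pos : 0 < Rabs f) by (apply Rabs_pos_lt; auto).
  assert (sqrt_f_pos : 0 < sqrt (Rabs f)) by (apply sqrt_lt_R0; auto).
  assert (Df_pos : 0 < D ^ 2 * Rabs f) by (apply Rmult_lt_0_compat; auto; apply pow2_gt_0; auto).
  assert (c_nonneg : 0 <= c).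
  { apply (Rmult_le_reg_r (D ^ 2 * Rabs f)); auto. rewrite Rmult_0_l, <- E. apply pow2_ge_0. }
  assert (abs_t : Rabs t = sqrt c * (Rabs D * sqrt (Rabs f))).
  { rewrite <- (sqrt_pow2 (Rabs t)) by apply Rabs_pos.
    rewrite pow2_abs, E, <- (pow2_abs D), !sqrt_mult, sqrt_pow2;
      auto using Rabs_pos, pow2_ge_0, Rmult_le_pos; lra. }
  assert (sign_t : sign (t * D) * t * D = Rabs t * Rabs D)
    by (rewrite <- Rabs_mult, <- sign_mul_self; ring).
  assert (abs_D : Rabs D * Rabs D = D * D) by (rewrite <- Rabs_mult; apply Rabs_pos_eq; nra).
  apply (Rmult_eq_reg_r D); auto.
  replace (sign (t * D) * (k * / sqrt (Rabs f)) * t * D)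
    with (k * / sqrt (Rabs f) * (sign (t * D) * t * D)) by ring.
  rewrite sign_t, abs_t.
  replace (k * / sqrt (Rabs f) * (sqrt c * (Rabs D * sqrt (Rabs f)) * Rabs D))
    with (sqrt c * k * (Rabs D * Rabs D)) by (field; lra).
  rewrite abs_D. ring.
Qed.

Definition near3 (x y z : R) (P : R -> R -> R -> Prop) : Prop :=
  exists d, d > 0 /\ forall x' y' z',
    Rabs (x' - x) < d -> Rabs (y' - y) < d -> Rabs (z' - z) < d -> P x' y' z'.

Lemma Rabs_minus_self_lt (a d : R) : d > 0 -> Rabs (a - a) < d.
Proof. intros d_pos. unfold Rminus. rewrite Rplus_opp_r, Rabs_R0. lra. Qed.

Lemma near3_mono x y z (P P' : R -> R -> R -> Prop) :
  (forall a b c, P a b c -> P' a b c) -> near3 x y z P -> near3 x y z P'.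
Proof. intros PP' [d [d_pos HP]]. exists d. split; auto. Qed.

Lemma near3_and x y z (P P' : R -> R -> R -> Prop) :
  near3 x y z P -> near3 x y z P' -> near3 x y z (fun a b c => P a b c /\ P' a b c).
Proof.
  intros [d [d_pos HP]] [d' [d'_pos HP']]. exists (Rmin d d'). split.
  - apply Rmin_glb_lt; auto.
  - intros a b c Ha Hb Hc. pose proof (Rmin_l d d'). pose proof (Rmin_r d d').
    split; [apply HP | apply HP']; lra.
Qed.

Definition uncurry3 (f : fn3) (p : R * (R * R)) : R := f (fst p) (fst (snd p)) (snd (snd p)).

Lemma locally_of_near3 x y z (P : R -> R -> R -> Prop) :
  near3 x y z P -> locally (x, (y, z)) (fun p => P (fst p) (fst (snd p)) (snd (snd p))).
Proof.
  intros [d [d_pos HP]]. exists (mkposreal d d_pos). intros [a [b c]] [Ha [Hb Hc]]. apply HP; auto.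
Qed.

Lemma cont3_continuous f x y z : cont3 f x y z <-> continuous (uncurry3 f) (x, (y, z)).
Proof.
  split.
  - intros Cf. apply filterlim_locally. intros eps.
    apply (locally_of_near3 _ _ _ _ (Cf eps (cond_pos eps))).
  - intros Cf eps eps_pos.
    destruct (proj1 (filterlim_locally _ _) Cf (mkposreal eps eps_pos)) as [d Hd].
    exists d. split; [apply cond_pos|]. intros a b c Ha Hb Hc.
    apply (Hd (a, (b, c))). repeat split; auto.
Qed.

Lemma cont3_near_ext f g x y z :
  near3 x y z (fun a b c => f a b c = g a b c) -> cont3 g x y z -> cont3 f x y z.
Proof.
  rewrite !cont3_continuous. intros near_fg Cg. apply continuous_ext_loc with (uncurry3 g); auto.
  apply (locally_of_near3 _ _ _ _ (near3_mono _ _ _ _ _ (fun a b c E => eq_sym E) near_fg)).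
Qed.

Lemma cont3_mult f g x y z :
  cont3 f x y z -> cont3 g x y z -> cont3 (fun a b c => f a b c * g a b c) x y z.
Proof.
  rewrite !cont3_continuous. intros Cf Cg.
  exact (continuous_mult (uncurry3 f) (uncurry3 g) _ Cf Cg).
Qed.

Lemma cont3_minus f g x y z :
  cont3 f x y z -> cont3 g x y z -> cont3 (fun a b c => f a b c - g a b c) x y z.
Proof.
  rewrite !cont3_continuous. intros Cf Cg.
  exact (continuous_minus (uncurry3 f) (uncurry3 g) _ Cf Cg).
Qed.

Definition coord (i : nat) (x y z : R) : R := match i with 0 => x | 1 => y | _ => z end%nat.

(* [pd i] differentiates along [axis i]; every [i >= 2] means z. *)
Definition axis (i : nat) : nat := match i with 0 => 0 | 1 => 1 | _ => 2 end%nat.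

Lemma cont3_axis (h : R -> R) i x y z :
  continuous h (coord i x y z) -> cont3 (fun a b c => h (coord i a b c)) x y z.
Proof.
  intros Ch eps eps_pos.
  destruct (proj1 (filterlim_locally _ _) Ch (mkposreal eps eps_pos)) as [d Hd].
  exists d. split; [apply cond_pos|]. intros a b c Ha Hb Hc. apply Hd.
  destruct i as [|[|i]]; auto.
Qed.

Lemma pd_near_ext j f g x y z :
  near3 x y z (fun a b c => f a b c = g a b c) -> pd j f x y z = pd j g x y z.
Proof.
  intros [d [d_pos Hfg]].
  destruct j as [|[|j]]; simpl; apply Derive_ext_loc; exists (mkposreal d d_pos); intros t Ht;
    apply Hfg; auto using Rabs_minus_self_lt.
Qed.

Lemma ex_pd_near_ext j f g x y z :
  near3 x y z (fun a b c => f a b c = g a b c) -> ex_pd j g x y z -> ex_pd j f x y z.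
Proof.
  intros [d [d_pos Hfg]].
  destruct j as [|[|j]]; simpl; apply ex_derive_ext_loc; exists (mkposreal d d_pos); intros t Ht;
    symmetry; apply Hfg; auto using Rabs_minus_self_lt.
Qed.

Lemma pd_axis j i (k : R) (h : R -> R) x y z :
  pd j (fun a b c => k * h (coord i a b c)) x y z =
  if Nat.eqb (axis j) (axis i) then k * Derive h (coord i x y z) else 0.
Proof.
  destruct j as [|[|j]], i as [|[|i]]; simpl; first [apply Derive_scal | apply Derive_const].
Qed.

Lemma ex_pd_axis j i (k : R) (h : R -> R) x y z :
  ex_derive h (coord i x y z) -> ex_pd j (fun a b c => k * h (coord i a b c)) x y z.
Proof.
  intros Dh. destruct j as [|[|j]], i as [|[|i]]; simpl;
    first [apply ex_derive_scal; exact Dh | apply ex_derive_const].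
Qed.

Definition axis_deriv (i : nat) (h : R -> R) (l : list nat) : R -> R :=
  if forallb (fun j => Nat.eqb (axis j) (axis i)) l then Derive_n h (length l) else fun _ => 0.

Lemma axis_deriv_cons i h j l t :
  axis_deriv i h (j :: l) t =
  if Nat.eqb (axis j) (axis i) then Derive (axis_deriv i h l) t else 0.
Proof.
  unfold axis_deriv. simpl. destruct (Nat.eqb (axis j) (axis i)); simpl; auto.
  destruct (forallb _ l); simpl; auto. rewrite Derive_const. reflexivity.
Qed.

Lemma ex_derive_axis_deriv i h l t : smooth1_at h t -> ex_derive (axis_deriv i h l) t.
Proof.
  intros Sh. unfold axis_deriv. destruct (forallb _ l).
  - exact (Sh (S (length l))).
  - apply ex_derive_const.
Qed.

Definition locally_constant_on (U : R -> R -> R -> Prop) (s : fn3) : Prop :=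
  forall x y z, U x y z -> near3 x y z (fun a b c => U a b c /\ s a b c = s x y z).

Definition separated (s : fn3) (i : nat) (h : R -> R) : fn3 :=
  fun x y z => s x y z * h (coord i x y z).

Section Separated.

Variables (U : R -> R -> R -> Prop) (s : fn3) (i : nat) (h : R -> R).
Hypothesis s_const : locally_constant_on U s.
Hypothesis h_smooth : forall x y z, U x y z -> smooth1_at h (coord i x y z).

Lemma near_frozen_factor (g : fn3) (H : R -> R) x y z :
  (forall a b c, U a b c -> g a b c = s a b c * H (coord i a b c)) -> U x y z ->
  near3 x y z (fun a b c => g a b c = s x y z * H (coord i a b c)).
Proof.
  intros Hg Ux. refine (near3_mono _ _ _ _ _ _ (s_const x y z Ux)).
  intros a b c [Ua Es]. rewrite Hg, Es; auto.
Qed.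

Lemma iter_pd_separated l x y z : U x y z ->
  iter_pd l (separated s i h) x y z = s x y z * axis_deriv i h l (coord i x y z).
Proof.
  revert x y z; induction l as [|j l IH]; intros x y z Ux; [reflexivity|].
  change (pd j (iter_pd l (separated s i h)) x y z
          = s x y z * axis_deriv i h (j :: l) (coord i x y z)).
  rewrite (pd_near_ext j _ (fun a b c => s x y z * axis_deriv i h l (coord i a b c)))
    by (apply near_frozen_factor; auto).
  rewrite pd_axis, axis_deriv_cons. destruct (Nat.eqb _ _); ring.
Qed.

Lemma smooth3_on_separated : smooth3_on U (separated s i h).
Proof.
  intros l x y z Ux.
  pose proof (near_frozen_factor _ _ x y z (iter_pd_separated l) Ux) as near_l.
  pose proof (ex_derive_axis_deriv i h l _ (h_smooth x y z Ux)) as D.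
  split.
  - apply (cont3_near_ext _ _ _ _ _ near_l).
    apply (cont3_axis (fun t => s x y z * axis_deriv i h l t)).
    exact (continuous_scal_r (s x y z) (axis_deriv i h l) _ (ex_derive_continuous _ _ D)).
  - intros j. apply (ex_pd_near_ext _ _ _ _ _ _ near_l), ex_pd_axis, D.
Qed.

Lemma pd_separated_off_axis j x y z : axis j <> axis i -> U x y z ->
  pd j (separated s i h) x y z = 0.
Proof.
  intros off Ux.
  change (iter_pd [j] (separated s i h) x y z = 0).
  rewrite iter_pd_separated, axis_deriv_cons by auto.
  apply Nat.eqb_neq in off. rewrite off. ring.
Qed.

End Separated.

Definition zero3 : fn3 := fun _ _ _ => 0.
Definition opp3 (s : fn3) : fn3 := fun x y z => - s x y z.

Lemma locally_constant_zero3 U : open3 U -> locally_constant_on U zero3.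
Proof.
  intros U_open x y z Ux. refine (near3_mono _ _ _ _ _ _ (U_open x y z Ux)).
  intros a b c Ua. split; auto.
Qed.

Lemma locally_constant_opp3 U s : locally_constant_on U s -> locally_constant_on U (opp3 s).
Proof.
  intros s_const x y z Ux. refine (near3_mono _ _ _ _ _ _ (s_const x y z Ux)).
  intros a b c [Ua Es]. unfold opp3. rewrite Es. auto.
Qed.

Lemma sign_eq_of_close (a b : R) : Rabs (b - a) < Rabs a -> sign b = sign a.
Proof.
  intros close. apply Rabs_def2 in close.
  destruct (Rtotal_order a 0) as [a_neg|[a_0|a_pos]].
  - rewrite Rabs_left in close by auto. rewrite !sign_eq_m1; auto; lra.
  - subst a. rewrite Rabs_R0 in close. lra.
  - rewrite Rabs_pos_eq in close by lra. rewrite !sign_eq_1; auto; lra.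
Qed.

Lemma sign_locally_constant U (g : fn3) : open3 U ->
  (forall x y z, U x y z -> cont3 g x y z /\ g x y z <> 0) ->
  locally_constant_on U (fun x y z => sign (g x y z)).
Proof.
  intros U_open Hg x y z Ux. destruct (Hg x y z Ux) as [Cg g_nz].
  refine (near3_mono _ _ _ _ _ _
            (near3_and _ _ _ _ _ (U_open x y z Ux) (Cg (Rabs (g x y z)) (Rabs_pos_lt _ g_nz)))).
  intros a b c [Ua close]. split; auto. apply sign_eq_of_close; auto.
Qed.

Definition split_form (s1 s2 s3 : fn3) (a b c : R -> R) : oneform :=
  OneForm (separated s1 0 a) (separated s2 1 b) (separated s3 2 c).

Definition coordinate_relation (s1 s2 s3 : fn3) (a b c : R -> R) : list oneform :=
  [split_form s1 zero3 zero3 a b c; split_form zero3 s2 zero3 a b c;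
   split_form zero3 zero3 s3 a b c; split_form (opp3 s1) (opp3 s2) (opp3 s3) a b c].

Section CoordinateRelation.

Variables (U : R -> R -> R -> Prop) (a b c : R -> R).
Hypothesis a_smooth : forall x y z, U x y z -> smooth1_at a x.
Hypothesis b_smooth : forall x y z, U x y z -> smooth1_at b y.
Hypothesis c_smooth : forall x y z, U x y z -> smooth1_at c z.

Lemma closed_on_split_form s1 s2 s3 :
  locally_constant_on U s1 -> locally_constant_on U s2 -> locally_constant_on U s3 ->
  closed_on U (split_form s1 s2 s3 a b c).
Proof.
  intros C1 C2 C3.
  split; [|split; [|split]].
  - exact (smooth3_on_separated U s1 0 a C1 a_smooth).
  - exact (smooth3_on_separated U s2 1 b C2 b_smooth).
  - exact (smooth3_on_separated U s3 2 c C3 c_smooth).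
  - intros x y z Ux. cbn [fdx fdy fdz split_form].
    rewrite !(pd_separated_off_axis U s1 0 a), !(pd_separated_off_axis U s2 1 b),
      !(pd_separated_off_axis U s3 2 c); auto; discriminate.
Qed.

Lemma coordinate_relation_abelian (t1 t2 t3 s1 s2 s3 : fn3) : open3 U ->
  locally_constant_on U s1 -> locally_constant_on U s2 -> locally_constant_on U s3 ->
  (forall x y z, U x y z ->
     separated s1 0 a x y z * t1 x y z + separated s2 1 b x y z * t2 x y z
     + separated s3 2 c x y z * t3 x y z = 0) ->
  abelian_relation U [fol_x; fol_y; fol_z; line_fol t1 t2 t3] (coordinate_relation s1 s2 s3 a b c).
Proof.
  intros U_open C1 C2 C3 on_tau.
  pose proof (locally_constant_zero3 U U_open) as C0.
  split; [reflexivity|split; [|split]].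
  - repeat apply Forall2_cons; try apply Forall2_nil; intros x y z v Ux Tv;
      unfold form_at, split_form, separated, zero3, opp3; cbn [fdx fdy fdz].
    + unfold fol_x in Tv. rewrite Tv. ring.
    + unfold fol_y in Tv. rewrite Tv. ring.
    + unfold fol_z in Tv. rewrite Tv. ring.
    + destruct Tv as [k ->]. cbn [vx vy vz].
      transitivity (- k * (separated s1 0 a x y z * t1 x y z + separated s2 1 b x y z * t2 x y z
                           + separated s3 2 c x y z * t3 x y z)); [unfold separated; ring|].
      rewrite on_tau; auto. ring.
  - repeat apply Forall_cons; try apply Forall_nil; apply closed_on_split_form;
      auto using locally_constant_opp3.
  - intros x y z v Ux. simpl.
    unfold form_at, split_form, separated, zero3, opp3; cbn [fdx fdy fdz]. ring.
Qed.

End CoordinateRelation.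

Definition axis_image (U : R -> R -> R -> Prop) (i : nat) (t : R) : Prop :=
  exists x y z, U x y z /\ coord i x y z = t.

Lemma open1_axis_image U i : open3 U -> open1 (axis_image U i).
Proof.
  intros U_open t [x [y [z [Ux <-]]]]. destruct (U_open x y z Ux) as [d [d_pos near]].
  exists d. split; auto. intros t' Ht'.
  destruct i as [|[|i]]; simpl in Ht'.
  - exists t', y, z. split; auto. apply near; auto using Rabs_minus_self_lt.
  - exists x, t', z. split; auto. apply near; auto using Rabs_minus_self_lt.
  - exists x, y, t'. split; auto. apply near; auto using Rabs_minus_self_lt.
Qed.

Lemma smooth_on_axis_image U i h :
  (forall x y z, U x y z -> smooth1_at h (coord i x y z)) -> smooth_on (axis_image U i) h.
Proof. intros Sh. apply smooth_on_of_smooth1. intros t [x [y [z [Ux <-]]]]. auto. Qed.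

Definition weighted (a f : R -> R) (t : R) : R := a t * / sqrt (Rabs (f t)).

Lemma weighted_row_smooth U i (a b c d : R -> R) (lam mu : R) : open3 U ->
  (forall h, In h [a; b; c] -> forall x y z, U x y z -> smooth1_at h (coord i x y z)) ->
  (forall x y z, U x y z -> stackel_row a b c lam mu (coord i x y z) <> 0) ->
  In d [a; b; c] ->
  forall x y z, U x y z -> smooth1_at (weighted d (stackel_row a b c lam mu)) (coord i x y z).
Proof.
  intros U_open row_smooth row_nz d_in x y z Ux.
  pose proof (open1_axis_image U i U_open) as V_open.
  assert (coeff_smooth : forall h, In h [a; b; c] -> smooth_on (axis_image U i) h)
    by (intros h h_in; apply smooth_on_axis_image, row_smooth, h_in).
  assert (in_image : axis_image U i (coord i x y z)) by (exists x, y, z; auto).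
  refine (smooth1_of_smooth_on _ _ _ V_open _ in_image).
  apply (smooth_on_mult _ V_open); [apply coeff_smooth, d_in|].
  apply (smooth_on_inv_sqrt_abs _ V_open).
  - apply (smooth_on_plus _ V_open); [apply (smooth_on_plus _ V_open)|];
      try apply (smooth_on_scal _ V_open); apply coeff_smooth; simpl; auto.
  - intros t [x' [y' [z' [Ux' <-]]]]. auto.
Qed.

Section StackelWeb.

Variables (U : R -> R -> R -> Prop) (E K P F L Q G M Rf : R -> R) (lam mu : R) (t1 t2 t3 : fn3).

Local Notation d1 := (den1 E K P F L Q G M Rf).
Local Notation d2 := (den2 E K P F L Q G M Rf).
Local Notation d3 := (den3 E K P F L Q G M Rf).
Local Notation f1 := (stackel_row E K P lam mu).
Local Notation f2 := (stackel_row F L Q lam mu).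
Local Notation f3 := (stackel_row G M Rf lam mu).

Hypothesis U_open : open3 U.
Hypothesis U_nonempty : exists x y z, U x y z.
Hypothesis coeffs_smooth : forall x y z, U x y z ->
  smooth1_at E x /\ smooth1_at K x /\ smooth1_at P x /\
  smooth1_at F y /\ smooth1_at L y /\ smooth1_at Q y /\
  smooth1_at G z /\ smooth1_at M z /\ smooth1_at Rf z.
Hypothesis nondegenerate : forall x y z, U x y z ->
  stDelta E K P F L Q G M Rf x y z <> 0 /\ d1 x y z <> 0 /\ d2 x y z <> 0 /\ d3 x y z <> 0.
Hypothesis four_directions : forall x y z, U x y z ->
  four_distinct_points (conic2 E K P F L Q G M Rf lam x y z) (conic3 E K P F L Q G M Rf mu x y z).
Hypothesis tau_continuous : forall x y z, U x y z ->
  cont3 t1 x y z /\ cont3 t2 x y z /\ cont3 t3 x y z.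
Hypothesis tau_direction : forall x y z, U x y z ->
  proj_sol (conic2 E K P F L Q G M Rf lam x y z) (conic3 E K P F L Q G M Rf mu x y z)
    (Vec3 (t1 x y z) (t2 x y z) (t3 x y z)).

Lemma tau_fiber x y z : U x y z ->
  f1 x <> 0 /\ f2 y <> 0 /\ f3 z <> 0 /\ t1 x y z <> 0 /\ t2 x y z <> 0 /\ t3 x y z <> 0 /\
  exists c, t1 x y z ^ 2 = c * (d1 x y z ^ 2 * Rabs (f1 x)) /\
            t2 x y z ^ 2 = c * (d2 x y z ^ 2 * Rabs (f2 y)) /\
            t3 x y z ^ 2 = c * (d3 x y z ^ 2 * Rabs (f3 z)).
Proof.
  intros Ux. destruct (nondegenerate x y z Ux) as (D & D1 & D2 & D3).
  exact (stackel_fiber E K P F L Q G M Rf lam mu x y z D D1 D2 D3 _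
           (four_directions x y z Ux) (tau_direction x y z Ux)).
Qed.

Lemma coeffs_smooth_x h : In h [E; K; P] -> forall x y z, U x y z -> smooth1_at h (coord 0 x y z).
Proof.
  intros h_in x y z Ux. destruct (coeffs_smooth x y z Ux) as (? & ? & ? & ? & ? & ? & ? & ? & ?).
  destruct h_in as [<-|[<-|[<-|[]]]]; assumption.
Qed.

Lemma coeffs_smooth_y h : In h [F; L; Q] -> forall x y z, U x y z -> smooth1_at h (coord 1 x y z).
Proof.
  intros h_in x y z Ux. destruct (coeffs_smooth x y z Ux) as (? & ? & ? & ? & ? & ? & ? & ? & ?).
  destruct h_in as [<-|[<-|[<-|[]]]]; assumption.
Qed.

Lemma coeffs_smooth_z h : In h [G; M; Rf] -> forall x y z, U x y z -> smooth1_at h (coord 2 x y z).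
Proof.
  intros h_in x y z Ux. destruct (coeffs_smooth x y z Ux) as (? & ? & ? & ? & ? & ? & ? & ? & ?).
  destruct h_in as [<-|[<-|[<-|[]]]]; assumption.
Qed.

Lemma dens_continuous x y z : U x y z -> cont3 d1 x y z /\ cont3 d2 x y z /\ cont3 d3 x y z.
Proof.
  intros Ux.
  assert (Cx : forall h, In h [E; K; P] -> cont3 (fun a b c => h a) x y z)
    by (intros h h_in; exact (cont3_axis h 0 x y z
          (ex_derive_continuous _ _ (coeffs_smooth_x h h_in x y z Ux 1%nat)))).
  assert (Cy : forall h, In h [F; L; Q] -> cont3 (fun a b c => h b) x y z)
    by (intros h h_in; exact (cont3_axis h 1 x y z
          (ex_derive_continuous _ _ (coeffs_smooth_y h h_in x y z Ux 1%nat)))).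
  assert (Cz : forall h, In h [G; M; Rf] -> cont3 (fun a b c => h c) x y z)
    by (intros h h_in; exact (cont3_axis h 2 x y z
          (ex_derive_continuous _ _ (coeffs_smooth_z h h_in x y z Ux 1%nat)))).
  unfold den1, den2, den3.
  repeat split; apply cont3_minus; apply cont3_mult;
    first [apply Cx | apply Cy | apply Cz]; simpl; auto.
Qed.

Local Notation sign1 := (fun x y z => sign (t1 x y z * d1 x y z)).
Local Notation sign2 := (fun x y z => sign (t2 x y z * d2 x y z)).
Local Notation sign3 := (fun x y z => sign (t3 x y z * d3 x y z)).

Lemma signs_locally_constant :
  locally_constant_on U sign1 /\ locally_constant_on U sign2 /\ locally_constant_on U sign3.
Proof.
  repeat split; apply sign_locally_constant; auto; intros x y z Ux;
    destruct (tau_fiber x y z Ux) as (_ & _ & _ & T1 & T2 & T3 & _),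
      (nondegenerate x y z Ux) as (_ & D1 & D2 & D3),
      (dens_continuous x y z Ux) as (C1 & C2 & C3),
      (tau_continuous x y z Ux) as (Ct1 & Ct2 & Ct3);
    (split; [apply cont3_mult | apply Rmult_integral_contrapositive_currified]); auto.
Qed.

Definition stackel_relation (a b c : R -> R) : list oneform :=
  coordinate_relation sign1 sign2 sign3 (weighted a f1) (weighted b f2) (weighted c f3).

Lemma stackel_relation_abelian (a b c : R -> R) :
  In a [E; K; P] -> In b [F; L; Q] -> In c [G; M; Rf] ->
  (forall x y z, a x * d1 x y z + b y * d2 x y z + c z * d3 x y z = 0) ->
  abelian_relation U [fol_x; fol_y; fol_z; line_fol t1 t2 t3] (stackel_relation a b c).
Proof.
  intros a_in b_in c_in orthogonal.
  destruct signs_locally_constant as (S1 & S2 & S3).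
  apply coordinate_relation_abelian; auto.
  - exact (weighted_row_smooth U 0 E K P a lam mu U_open coeffs_smooth_x
             (fun x y z Ux => proj1 (tau_fiber x y z Ux)) a_in).
  - exact (weighted_row_smooth U 1 F L Q b lam mu U_open coeffs_smooth_y
             (fun x y z Ux => proj1 (proj2 (tau_fiber x y z Ux))) b_in).
  - exact (weighted_row_smooth U 2 G M Rf c lam mu U_open coeffs_smooth_z
             (fun x y z Ux => proj1 (proj2 (proj2 (tau_fiber x y z Ux)))) c_in).
  - intros x y z Ux.
    destruct (tau_fiber x y z Ux) as (N1 & N2 & N3 & T1 & T2 & T3 & k & E1 & E2 & E3).
    destruct (nondegenerate x y z Ux) as (_ & D1 & D2 & D3).
    unfold separated, weighted, coord. cbv beta.
    rewrite (sign_scaled_root _ _ _ k _ T1 D1 N1 E1), (sign_scaled_root _ _ _ k _ T2 D2 N2 E2),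
      (sign_scaled_root _ _ _ k _ T3 D3 N3 E3).
    transitivity (sqrt k * (a x * d1 x y z + b y * d2 x y z + c z * d3 x y z)); [ring|].
    rewrite orthogonal. ring.
Qed.

Lemma stackel_relations_independent (cs : list R) : length cs = 2%nat ->
  lincomb_zero U cs [stackel_relation K L M; stackel_relation P Q Rf] ->
  List.Forall (fun c => c = 0) cs.
Proof.
  intros cs_len lincomb. destruct cs as [|c1 [|c2 [|? ?]]]; try discriminate.
  destruct U_nonempty as [x [y [z Ux]]].
  destruct (tau_fiber x y z Ux) as (N1 & N2 & N3 & T1 & T2 & T3 & _).
  destruct (nondegenerate x y z Ux) as (D & D1 & D2 & D3).
  assert (weight_nz :
    forall t d f, t <> 0 -> d <> 0 -> f <> 0 -> sign (t * d) * / sqrt (Rabs f) <> 0).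
  { intros t d f t_nz d_nz f_nz. apply Rmult_integral_contrapositive_currified.
    - apply sign_neq_0, Rmult_integral_contrapositive_currified; auto.
    - apply Rinv_neq_0_compat, Rgt_not_eq, sqrt_lt_R0, Rabs_pos_lt; auto. }
  pose proof (lincomb 0%nat x y z (Vec3 1 0 0) Ux) as Lx.
  pose proof (lincomb 1%nat x y z (Vec3 0 1 0) Ux) as Ly.
  pose proof (lincomb 2%nat x y z (Vec3 0 0 1) Ux) as Lz.
  unfold lincomb_zero, stackel_relation, coordinate_relation, split_form, form_at, separated,
    weighted, zero3 in Lx, Ly, Lz.
  cbn [combine map fold_right nth fst snd fdx fdy fdz vx vy vz coord] in Lx, Ly, Lz.
  destruct (stackel_rows_independent E K P F L Q G M Rf x y z c1 c2 D) as [c1_0 c2_0].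
  - apply (Rmult_eq_reg_l (sign (t1 x y z * d1 x y z) * / sqrt (Rabs (f1 x)))); auto.
    rewrite Rmult_0_r, <- Lx. ring.
  - apply (Rmult_eq_reg_l (sign (t2 x y z * d2 x y z) * / sqrt (Rabs (f2 y)))); auto.
    rewrite Rmult_0_r, <- Ly. ring.
  - apply (Rmult_eq_reg_l (sign (t3 x y z * d3 x y z) * / sqrt (Rabs (f3 z)))); auto.
    rewrite Rmult_0_r, <- Lz. ring.
  - repeat constructor; auto.
Qed.

End StackelWeb.

Theorem proposition2
  (U : R -> R -> R -> Prop) (E K P F L Q G M Rf : R -> R) (lam mu : R)
  (t1 t2 t3 : fn3) :
  open3 U ->
  (exists x y z, U x y z) ->
  (forall x y z, U x y z ->
     smooth1_at E x /\ smooth1_at K x /\ smooth1_at P x /\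
     smooth1_at F y /\ smooth1_at L y /\ smooth1_at Q y /\
     smooth1_at G z /\ smooth1_at M z /\ smooth1_at Rf z) ->
  (forall x y z, U x y z ->
     stDelta E K P F L Q G M Rf x y z <> 0 /\
     den1 E K P F L Q G M Rf x y z <> 0 /\
     den2 E K P F L Q G M Rf x y z <> 0 /\
     den3 E K P F L Q G M Rf x y z <> 0) ->
  (forall x y z, U x y z ->
     four_distinct_points
       (fun v => I2q E K P F L Q G M Rf x y z v - lam * gq E K P F L Q G M Rf x y z v)
       (fun v => I3q E K P F L Q G M Rf x y z v - mu * gq E K P F L Q G M Rf x y z v)) ->
  (* (t1,t2,t3) spans one of the four direction fields tau_i *)
  smooth3_on U t1 -> smooth3_on U t2 -> smooth3_on U t3 ->
  (forall x y z, U x y z ->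
     proj_sol
       (fun v => I2q E K P F L Q G M Rf x y z v - lam * gq E K P F L Q G M Rf x y z v)
       (fun v => I3q E K P F L Q G M Rf x y z v - mu * gq E K P F L Q G M Rf x y z v)
       (Vec3 (t1 x y z) (t2 x y z) (t3 x y z))) ->
  rank_ge U [fol_x; fol_y; fol_z; line_fol t1 t2 t3] 2.
Proof.
  intros U_open U_nonempty coeffs_smooth nondegenerate four_directions
    t1_smooth t2_smooth t3_smooth tau_direction.
  assert (tau_continuous :
    forall x y z, U x y z -> cont3 t1 x y z /\ cont3 t2 x y z /\ cont3 t3 x y z).
  { intros x y z Ux.
    repeat split; [apply (t1_smooth []) | apply (t2_smooth []) | apply (t3_smooth [])]; auto. }
  exists [stackel_relation E K P F L Q G M Rf lam mu t1 t2 t3 K L M;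
          stackel_relation E K P F L Q G M Rf lam mu t1 t2 t3 P Q Rf].
  split; [reflexivity|split].
  - repeat apply Forall_cons; try apply Forall_nil;
      apply stackel_relation_abelian; simpl; auto;
      intros x y z; unfold den1, den2, den3; ring.
  - apply stackel_relations_independent; auto.
Qed.
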